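(* An even nonnegative integer $n$ satisfies $v(n)=3$ if and only if $n\in\{20,26,34,46,48,60\}$.
   Context: A hyperbinary expansion of a nonnegative integer $n$ is a word $x_0\cdots x_k$ over $\{0,1,2\}$ with $x_0\ne0$ and $\sum_i x_i2^{k-i}=n$. The empty word is the unique hyperbinary expansion of $0$. Write $\mathcal H(n)$ for the set of such expansions and $b(n)=|\mathcal H(n)|$. $A(n)$ is the directed graph on $\mathcal H(n)$ with an arc from $\mathbf x02\mathbf y$ to $\mathbf x10\mathbf y$, from $2\mathbf y$ to $10\mathbf y$, and from $\mathbf x12\mathbf y$ to $\mathbf x20\mathbf y$, for arbitrary words $\mathbf x,\mathbf y$ whenever both endpoints lie in $\mathcal H(n)$. $A(n)$ is connected. $v(n)$ denotes the cyclomatic number of $A(n)$: (number of arcs) $-\,b(n)+1$. *)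

(* Words over {0,1,2} are represented as seq nat. *)
From mathcomp Require Import all_boot all_algebra.
Set Implicit Arguments. Unset Strict Implicit. Unset Printing Implicit Defensive.

(* value of a word x_0 ... x_k : sum_i x_i 2^(k-i) (Horner scheme) *)
Definition wval (w : seq nat) : nat := foldl (fun acc d => acc.*2 + d) 0 w.

Definition is_hyper (n : nat) (w : seq nat) : bool :=
  all (fun d => d <= 2) w && (if w is x0 :: _ then x0 != 0 else true) && (wval w == n).

Fixpoint words (k : nat) : seq (seq nat) :=
  if k is k'.+1 then [seq d :: w | d <- [:: 0; 1; 2], w <- words k'] else [:: [::]].

(* H(n): a word of length L with nonzero leading digit has value >= 2^(L-1),
   so every hyperbinary expansion of n has length <= trunc_log 2 n + 1; we
   enumerate all words of such lengths and keep the expansions of n. *)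
Definition Hexp (n : nat) : seq (seq nat) :=
  [seq w <- flatten [seq words k | k <- iota 0 (trunc_log 2 n).+2] | is_hyper n w].

Definition b (n : nat) : nat := size (Hexp n).

Definition rewrite_at (u : seq nat) (i : nat) : option (seq nat) :=
  match drop i u with
  | 0 :: 2 :: y => Some (take i u ++ [:: 1, 0 & y])
  | 1 :: 2 :: y => Some (take i u ++ [:: 2, 0 & y])
  | _ => None
  end.

Definition step (u : seq nat) : seq (seq nat) :=
  pmap (rewrite_at u) (iota 0 (size u)) ++
  (if u is 2 :: y then [:: [:: 1, 0 & y]] else [::]).

Definition arc (u v : seq nat) : bool := v \in step u.

Definition narcs (n : nat) : nat :=
  size [seq p <- [seq (u, v) | u <- Hexp n, v <- Hexp n] | arc p.1 p.2].

Definition cyclo (n : nat) : int := (narcs n)%:Z - (b n)%:Z + 1.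

From Pilot Require Import Defs.
From mathcomp Require Import all_boot all_algebra zify.
(* Re-import so that [Defs.arc] shadows [path.arc]. *)
Import Defs.

(* Splitting off the last digit gives H(2m+1) = H(m)1 and H(2m+2) = H(m+1)0 + H(m)2.
   An arc between such words either keeps the last digit, or turns a final 2 into 0
   while incrementing the last digit of the prefix (0 -> 1, 1 -> 2, or the empty
   prefix to 1).  With c(m) the number of expansions of m whose last digit can be
   incremented, this gives v(2m+1) = v(m), v(2m+2) = v(m+1) + v(m) + c(m) - 1,
   c(2m+1) = b(m) and c(2m+2) = b(m+1).  If v(2m+2) = 0 then v(m) = v(m+1) = 0 and
   c(m) = 1, which forces b(m) and b(m+1) to be 1 or at least 5, as b(p) >= 5 for
   even p >= 16.  Writing n = 2(2m+1)+2 or n = 2(2m+2)+2, induction shows that v(n)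
   is 0 or at least 4 for every even n >= 62; the base cases n < 128, as well as
   all n < 62, are settled by evaluating the recurrences. *)

Lemma foldl_wval a w :
  foldl (fun acc d => acc.*2 + d) a w = a * 2 ^ size w + wval w.
Proof.
rewrite /wval; elim: w a => [|d w IH] a /=; first by rewrite muln1 addn0.
rewrite IH (IH (0.*2 + d)) expnS; lia.
Qed.

Lemma wval_cons d w : wval (d :: w) = d * 2 ^ size w + wval w.
Proof. by rewrite {1}/wval /= foldl_wval double0. Qed.

Lemma wval_rcons w d : wval (rcons w d) = (wval w).*2 + d.
Proof. by rewrite /wval foldl_rcons. Qed.

Lemma mem_words k w : (w \in words k) = (size w == k) && all (fun d => d <= 2) w.
Proof.
elim: k w => [|k IH] w; first by case: w.
apply/allpairsPdep/idP => [[d [u [d012 uk ->]]]|].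
  move: uk; rewrite IH /= => /andP [/eqP -> ->]; rewrite eqxx andbT.
  by move: d012; rewrite !inE => /or3P [] /eqP ->.
case: w => [|d u] //= /andP [/eqP [size_u] /andP [d_le2 u_digits]].
exists d, u; split => //; last by rewrite IH size_u eqxx.
by rewrite !inE; move: d_le2; case: d => [|[|[|]]].
Qed.

Lemma words_uniq k : uniq (words k).
Proof.
elim: k => // k IH; apply: allpairs_uniq_dep => //.
by move=> [a u] [c v] _ _ /= [-> ->].
Qed.

Lemma size_hyper n w : is_hyper n w -> size w <= (trunc_log 2 n).+1.
Proof.
case: w => [|d w] // /andP [/andP [_ d_neq0] /eqP <-].
rewrite ltnS /=; apply: trunc_log_max => //.
rewrite wval_cons; case: d d_neq0 => // d _.
by rewrite mulSn -addnA leq_addr.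
Qed.

Lemma mem_Hexp n w : (w \in Hexp n) = is_hyper n w.
Proof.
rewrite /Hexp mem_filter andb_idr // => w_hyper.
apply/flattenP; exists (words (size w)).
  by apply/mapP; exists (size w); rewrite // mem_iota add0n ltnS size_hyper.
by rewrite mem_words eqxx; case/andP: w_hyper => /andP [].
Qed.

Lemma flatten_words_uniq s : uniq s -> uniq (flatten [seq words k | k <- s]).
Proof.
elim: s => //= k s IH /andP [ks s_uniq]; rewrite cat_uniq words_uniq IH // andbT.
apply/hasP => [[w /flattenP [t /mapP [j js ->]]]].
rewrite !mem_words => /andP [/eqP wj _] /andP [/eqP wk _].
by move: ks; rewrite -wk wj js.
Qed.

Lemma Hexp_uniq n : uniq (Hexp n).
Proof. exact/filter_uniq/flatten_words_uniq/iota_uniq. Qed.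

Definition hyperbinary (u : seq nat) := is_hyper (wval u) u.

Lemma is_hyperE n u : is_hyper n u = hyperbinary u && (wval u == n).
Proof. by rewrite /hyperbinary /is_hyper eqxx andbT. Qed.

Lemma hyperbinary_rcons u d :
  hyperbinary (rcons u d) = [&& d <= 2, hyperbinary u & (u == [::]) ==> (d != 0)].
Proof.
rewrite /hyperbinary /is_hyper !eqxx !andbT all_rcons.
case: u => [|a u] /=; first by rewrite andbT.
by case: (d <= 2); rewrite //= andbT.
Qed.

Lemma mem_map_rcons (T : eqType) (s : seq (seq T)) u d e :
  (rcons u d \in map (rcons^~ e) s) = (d == e) && (u \in s).
Proof.
apply/mapP/andP => [[x xs /rcons_inj [-> ->]] | [/eqP -> us]]; first by rewrite eqxx.
by exists u.
Qed.

Lemma nil_notin_map_rcons (T : eqType) (s : seq (seq T)) e :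
  ([::] \in map (rcons^~ e) s) = false.
Proof. by apply/mapP => [[[|? ?] _]]. Qed.

Lemma perm_Hexp_odd m : perm_eq (Hexp m.*2.+1) (map (rcons^~ 1) (Hexp m)).
Proof.
apply: uniq_perm; rewrite ?Hexp_uniq ?(map_inj_uniq (@rcons_injl _ _)) ?Hexp_uniq //.
case/lastP => [|u d]; first by rewrite nil_notin_map_rcons mem_Hexp.
rewrite mem_map_rcons !mem_Hexp !is_hyperE hyperbinary_rcons wval_rcons.
case: (hyperbinary u) => /=; last by rewrite !andbF.
case: d => [|[|[|d]]] /=; rewrite ?andbF ?implybT /=.
- by apply/negP => /andP [_ /eqP]; lia.
- by apply/eqP/eqP; lia.
- by apply/negP => /eqP; lia.
- by [].
Qed.

Lemma perm_Hexp_even m : perm_eq (Hexp m.+1.*2)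
  (map (rcons^~ 0) (Hexp m.+1) ++ map (rcons^~ 2) (Hexp m)).
Proof.
apply: uniq_perm; first exact: Hexp_uniq.
  rewrite cat_uniq !(map_inj_uniq (@rcons_injl _ _)) !Hexp_uniq /=.
  by rewrite andbT; apply/hasPn => _ /mapP [x _ ->]; rewrite mem_map_rcons.
case/lastP => [|u d]; first by rewrite mem_cat !nil_notin_map_rcons mem_Hexp.
rewrite mem_cat !mem_map_rcons !mem_Hexp !is_hyperE hyperbinary_rcons wval_rcons.
case: (hyperbinary u) => /=; last by rewrite !andbF.
case: d => [|[|[|d]]] /=; rewrite ?andbF ?implybT ?orbF //=.
- apply/andP/eqP => [[_ /eqP] | E]; first lia.
  split; last by apply/eqP; lia.
  by apply/implyP => /eqP u0; move: E; rewrite u0.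
- by apply/negP => /eqP; lia.
- by apply/eqP/eqP; lia.
Qed.

Inductive arc_rule : seq nat -> seq nat -> Prop :=
  | ArcRule02 x y : arc_rule (x ++ [:: 0, 2 & y]) (x ++ [:: 1, 0 & y])
  | ArcRule12 x y : arc_rule (x ++ [:: 1, 2 & y]) (x ++ [:: 2, 0 & y])
  | ArcRule2 y : arc_rule (2 :: y) [:: 1, 0 & y].

Lemma arcP u v : reflect (arc_rule u v) (arc u v).
Proof.
rewrite /arc /step mem_cat mem_pmap; apply: (iffP orP) => [[/mapP [i _] | ] | ].
- have {2}<- := cat_take_drop i u; rewrite /rewrite_at.
  by case: (drop i u) => [|[|[|a]] [|[|[|[|c]]] y]] //= [->]; constructor.
- by case: u => [|[|[|[|a]]] y] //; rewrite inE => /eqP ->; constructor.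
case=> [x y | x y | y]; last by right; rewrite inE.
all: left; apply/mapP; exists (size x); last first.
all: try by rewrite /rewrite_at drop_size_cat // take_size_cat.
all: by rewrite mem_iota size_cat /=; lia.
Qed.

(* The empty word increments to [:: 1]: this matches the rule 2y -> 10y. *)
Definition incr_last (u : seq nat) : option (seq nat) :=
  if u is a :: s then
    match last a s with
    | 0 => Some (rcons (belast a s) 1)
    | 1 => Some (rcons (belast a s) 2)
    | _ => None
    end
  else Some [:: 1].

Lemma incr_last_rcons x d : incr_last (rcons x d) =
  match d with 0 => Some (rcons x 1) | 1 => Some (rcons x 2) | _ => None end.
Proof. by case: x => [|a x] //=; rewrite last_rcons belast_rcons. Qed.

Lemma cats2 (T : Type) (x : seq T) a c : x ++ [:: a; c] = rcons (rcons x a) c.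
Proof. by rewrite -!cats1 -catA. Qed.

Lemma arc_rcons u v d e : arc (rcons u d) (rcons v e) =
  if d == e then arc u v else [&& d == 2, e == 0 & incr_last u == Some v].
Proof.
apply/arcP/idP.
  move Eu: (rcons u d) => u'; move Ev: (rcons v e) => v' uv.
  case: uv Eu Ev => [x y | x y | y]; case/lastP: y => [|y f].
  - rewrite !cats2 => /rcons_inj [-> ->] /rcons_inj [-> ->].
    by rewrite incr_last_rcons !eqxx.
  - rewrite -!rcons_cons -!rcons_cat => /rcons_inj [-> ->] /rcons_inj [-> ->].
    by rewrite eqxx; apply/arcP; constructor.
  - rewrite !cats2 => /rcons_inj [-> ->] /rcons_inj [-> ->].
    by rewrite incr_last_rcons !eqxx.
  - rewrite -!rcons_cons -!rcons_cat => /rcons_inj [-> ->] /rcons_inj [-> ->].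
    by rewrite eqxx; apply/arcP; constructor.
  - by rewrite -[[:: 2]]/(rcons [::] 2) -[[:: 1; 0]]/(rcons [:: 1] 0)
      => /rcons_inj [-> ->] /rcons_inj [-> ->].
  - rewrite -!rcons_cons => /rcons_inj [-> ->] /rcons_inj [-> ->].
    by rewrite eqxx; apply/arcP; constructor.
case: eqP => [<- /arcP [x y | x y | y] | _]; rewrite ?rcons_cat /=; try constructor.
case/and3P => /eqP -> /eqP ->; case/lastP: u => [/eqP [<-] | x a].
  exact: (ArcRule2 [::]).
rewrite incr_last_rcons; case: a => [|[|a]] // /eqP [<-]; rewrite -!cats2.
  exact: (ArcRule02 x [::]).
exact: (ArcRule12 x [::]).
Qed.

Definition narcs_between (s t : seq (seq nat)) := \sum_(u <- s) count (arc u) t.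

Lemma narcsE n : narcs n = narcs_between (Hexp n) (Hexp n).
Proof.
rewrite /narcs size_filter /narcs_between.
have sum_count_allpairs s t : count (fun p => arc p.1 p.2) [seq (u, v) | u <- s, v <- t]
    = \sum_(u <- s) count (arc u) t.
  elim: s => [|u s IH]; first by rewrite big_nil.
  by rewrite allpairs_cons count_cat IH big_cons count_map.
exact: sum_count_allpairs.
Qed.

Lemma perm_narcs_between {s s' t t' : seq (seq nat)} :
  perm_eq s s' -> perm_eq t t' -> narcs_between s t = narcs_between s' t'.
Proof.
move=> ss' /permP tt'; rewrite /narcs_between (perm_big _ ss').
by apply: eq_bigr => u _; apply: tt'.
Qed.

Definition nincr n := count (fun u => incr_last u != None) (Hexp n).

Lemma b_odd m : b m.*2.+1 = b m.
Proof. by rewrite /b (perm_size (perm_Hexp_odd m)) size_map. Qed.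

Lemma b_even m : b m.+1.*2 = b m.+1 + b m.
Proof. by rewrite /b (perm_size (perm_Hexp_even m)) size_cat !size_map. Qed.

Lemma nincr_odd m : nincr m.*2.+1 = b m.
Proof.
rewrite /nincr (permP (perm_Hexp_odd m)) count_map /b -count_predT.
by apply: eq_count => u /=; rewrite incr_last_rcons.
Qed.

Lemma nincr_even m : nincr m.+1.*2 = b m.+1.
Proof.
rewrite /nincr (permP (perm_Hexp_even m)) count_cat !count_map /b -count_predT.
rewrite [X in _ + X](eq_count (a2 := pred0)) ?count_pred0 ?addn0.
  by apply: eq_count => u /=; rewrite incr_last_rcons.
by move=> u /=; rewrite incr_last_rcons.
Qed.

Lemma narcs_odd m : narcs m.*2.+1 = narcs m.
Proof.
rewrite !narcsE (perm_narcs_between (perm_Hexp_odd m) (perm_Hexp_odd m)).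
rewrite /narcs_between big_map; apply: eq_bigr => u _; rewrite count_map.
by apply: eq_count => v /=; rewrite arc_rcons eqxx.
Qed.

Lemma incr_last_Hexp {m x w} : x \in Hexp m -> incr_last x = Some w -> w \in Hexp m.+1.
Proof.
case/lastP: x => [|y a]; first by rewrite mem_Hexp /is_hyper /= => /eqP <- [<-].
rewrite incr_last_rcons !mem_Hexp !is_hyperE hyperbinary_rcons wval_rcons.
case: a => [|[|a]] // /andP [/and3P [_ hy _] /eqP <-] [<-];
  by rewrite hyperbinary_rcons wval_rcons hy implybT /= ?addn0 ?addn1 ?addn2.
Qed.

Lemma count_incr_last {m x} : x \in Hexp m ->
  count (fun v => incr_last x == Some v) (Hexp m.+1) = (incr_last x != None).
Proof.
move=> xm; case E: (incr_last x) => [w|] /=; last first.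
  by rewrite (eq_count (a2 := pred0)) ?count_pred0.
rewrite (eq_count (a2 := pred1 w)); last by move=> v /=; rewrite eq_sym.
by rewrite count_uniq_mem ?Hexp_uniq // (incr_last_Hexp xm E).
Qed.

Lemma narcs_even m : narcs m.+1.*2 = narcs m.+1 + narcs m + nincr m.
Proof.
rewrite !narcsE (perm_narcs_between (perm_Hexp_even m) (perm_Hexp_even m)).
rewrite /narcs_between big_cat /= !big_map -addnA; congr (_ + _).
  apply: eq_bigr => u _; rewrite count_cat !count_map.
  rewrite [X in _ + X](eq_count (a2 := pred0)) ?count_pred0 ?addn0.
    by apply: eq_count => v /=; rewrite arc_rcons eqxx.
  by move=> v /=; rewrite arc_rcons.
rewrite /nincr -sum1_count [X in _ + X]big_mkcond -big_split /=; apply: eq_big_seq => u um.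
rewrite count_cat !count_map addnC; congr (_ + _).
  by apply: eq_count => v /=; rewrite arc_rcons eqxx.
rewrite -[RHS]/(nat_of_bool _) -(count_incr_last um).
by apply: eq_count => v /=; rewrite arc_rcons.
Qed.

Lemma b0 : b 0 = 1. Proof. by vm_compute. Qed.
Lemma narcs0 : narcs 0 = 0. Proof. by vm_compute. Qed.
Lemma nincr0 : nincr 0 = 1. Proof. by vm_compute. Qed.

Variant half_spec : nat -> Type :=
  | HalfZero : half_spec 0
  | HalfOdd m : half_spec m.*2.+1
  | HalfEven m : half_spec m.+1.*2.

Lemma halfP n : half_spec n.
Proof.
rewrite -[n]odd_double_half; case: (odd n); first exact: HalfOdd.
by case: n./2 => [|m]; [exact: HalfZero | exact: HalfEven].
Qed.

Lemma b_gt0 n : 0 < b n.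
Proof.
elim/ltn_ind: n => n IH; case: n / halfP IH => [|m|m] IH.
- by rewrite b0.
- by rewrite b_odd IH // -addnn; lia.
- by rewrite b_even addn_gt0 IH // -addnn; lia.
Qed.

Lemma nincr_gt0 n : 0 < nincr n.
Proof. by case: n / halfP => [|m|m]; rewrite ?nincr0 ?nincr_odd ?nincr_even ?b_gt0. Qed.

Lemma b_le_narcs n : b n <= narcs n + 1.
Proof.
elim/ltn_ind: n => n IH; case: n / halfP IH => [|m|m] IH.
- by rewrite b0.
- by rewrite b_odd narcs_odd IH // -addnn; lia.
- rewrite b_even narcs_even; have := IH m.+1; have := IH m; have := nincr_gt0 m.
  rewrite -!addnn; lia.
Qed.

Definition cyc n := narcs n + 1 - b n.

Lemma cycloE n : cyclo n = cyc n.
Proof. by rewrite /cyclo /cyc; have := b_le_narcs n; lia. Qed.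

Lemma cyc_odd m : cyc m.*2.+1 = cyc m.
Proof. by rewrite /cyc narcs_odd b_odd. Qed.

Lemma cyc_even m : cyc m.+1.*2 = cyc m.+1 + cyc m + (nincr m).-1.
Proof.
rewrite /cyc narcs_even b_even.
by have := b_le_narcs m.+1; have := b_le_narcs m; have := nincr_gt0 m; lia.
Qed.

(* Evaluating [(b n, cyc n, nincr n)] through the recurrences is far faster than
   enumerating [Hexp n]; the fuel only ensures termination. *)
Fixpoint bcn_rec (fuel n : nat) : nat * nat * nat :=
  if fuel is fuel'.+1 then
    if n is 0 then (1, 0, 1)
    else if odd n then let: (bh, vh, _) := bcn_rec fuel' n./2 in (bh, vh, bh)
    else let: (bh, vh, _) := bcn_rec fuel' n./2 in
         let: (bl, vl, cl) := bcn_rec fuel' n./2.-1 in (bh + bl, vh + vl + cl.-1, bh)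
  else (1, 0, 1).

Definition bcn n := bcn_rec n.+1 n.

Lemma bcnE n : bcn n = (b n, cyc n, nincr n).
Proof.
suff bcn_recE fuel k : k < fuel -> bcn_rec fuel k = (b k, cyc k, nincr k).
  exact: bcn_recE.
elim: fuel k => // fuel IH k; case: k / halfP => [|m|m] lt_fuel /=.
- by rewrite b0 nincr0 /cyc narcs0 b0.
- by rewrite odd_double uphalf_double IH ?b_odd ?cyc_odd ?nincr_odd //; lia.
- rewrite odd_double half_double /= !IH; try lia.
  by rewrite b_even cyc_even nincr_even.
Qed.

Lemma b_even_table : all (fun p => odd p || (5 <= (bcn p).1.1)) (iota 16 48).
Proof. by vm_compute. Qed.

Lemma cyc_even_table :
  all (fun n => odd n || ((bcn n).1.2 == 0) || (4 <= (bcn n).1.2)) (iota 62 66).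
Proof. by vm_compute. Qed.

Lemma cyc3_table :
  all (fun n => odd n || (((bcn n).1.2 == 3) == (n \in [:: 20; 26; 34; 46; 48; 60])))
      (iota 0 62).
Proof. by vm_compute. Qed.

Lemma b_even_ge5 p : ~~ odd p -> 16 <= p -> 5 <= b p.
Proof.
elim/ltn_ind: p => p IH p_even p_ge16; have [p_small | p_large] := ltnP p 64.
  move/allP/(_ p): b_even_table; rewrite mem_iota bcnE (negbTE p_even); apply; lia.
case: p / halfP IH p_even p_ge16 p_large => [|m|m] IH /=; rewrite ?odd_double //.
move=> _ _ m_large; rewrite b_even.
case: m / halfP IH m_large => [|k|k] IH k_large; first lia.
- by rewrite -doubleS ltn_addr // IH ?odd_double //; lia.
- by rewrite ltn_addl // IH ?odd_double //; lia.
Qed.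

Lemma b_double_gt1 m : 1 < b m.+1.*2.
Proof. by rewrite b_even -add1n leq_add ?b_gt0. Qed.

Lemma b_gap_of_nincr1 {m} : 31 <= m -> nincr m = 1 ->
  ((b m == 1) || (5 <= b m)) && ((b m.+1 == 1) || (5 <= b m.+1)).
Proof.
case: m / halfP => [|r|i] //= m_ge31.
  rewrite nincr_odd b_odd => -> /=.
  by rewrite -doubleS b_even_ge5 ?odd_double ?orbT //; lia.
rewrite nincr_even b_even b_odd => bi1; rewrite bi1 eqxx /= andbT.
case: i / halfP bi1 m_ge31 => [|j|j] bi1 m_ge31; first lia.
  by move: (b_double_gt1 j); rewrite doubleS bi1.
have : 5 <= b j.+1.*2 by rewrite b_even_ge5 ?odd_double //; lia.
lia.
Qed.

Lemma cyc_gap_step m x : (cyc m.+1.*2 == 0) || (4 <= cyc m.+1.*2) ->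
    31 <= m -> (x == m) || (x == m.+1) ->
  let v := cyc m.+1.*2 + cyc x + (b x).-1 in (v == 0) || (4 <= v).
Proof.
move=> q_gap m_ge31 x_m /=; case/orP: q_gap => [|]; last lia.
rewrite cyc_even => /eqP cyc_q0.
have nincr_m : nincr m = 1 by have := nincr_gt0 m; lia.
have := b_gap_of_nincr1 m_ge31 nincr_m.
by case/orP: x_m => /eqP ->; lia.
Qed.

Lemma cyc_even_gap {n} : ~~ odd n -> 62 <= n -> (cyc n == 0) || (4 <= cyc n).
Proof.
elim/ltn_ind: n => n IH n_even n_ge62; have [n_small | n_large] := ltnP n 128.
  by move/allP/(_ n): cyc_even_table; rewrite mem_iota bcnE (negbTE n_even); apply; lia.
case: n / halfP IH n_even n_ge62 n_large => [|m|k] IH /=; rewrite ?odd_double //.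
move=> _ _ k_large; rewrite cyc_even.
case: k / halfP IH k_large => [|m|m] IH k_large; first lia.
all: have /cyc_gap_step gap : (cyc m.+1.*2 == 0) || (4 <= cyc m.+1.*2).
all: try by apply: IH; rewrite ?odd_double //; lia.
  by rewrite -doubleS cyc_odd nincr_odd; apply: gap; rewrite ?eqxx //; lia.
by rewrite cyc_odd nincr_even [cyc m.+1 + _]addnC; apply: gap; rewrite ?eqxx ?orbT //; lia.
Qed.

Theorem mainTheorem5 (n : nat) :
  ~~ odd n -> (cyclo n = Posz 3 <-> n \in [:: 20; 26; 34; 46; 48; 60]).
Proof.
move=> n_even; rewrite cycloE; have [n_small | n_large] := ltnP n 62.
  move/allP/(_ n): cyc3_table; rewrite mem_iota bcnE (negbTE n_even) /= => /(_ n_small).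
  by move=> /eqP <-; split => [[->] | /eqP ->].
have /orP [/eqP -> | cyc_ge4] := cyc_even_gap n_even n_large.
  split => // /[!inE]; lia.
by split => [[cyc3] | /[!inE]]; lia.
Qed.
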